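(* Let $L\ge 1$ and consider the following Markov process on $\{0,1\}^L$, with coordinates indexed by $\{0,1,\dots,L-1\}$ and started from an arbitrary state $\Gamma^0$. Given the state $\Gamma^i$, the state $\Gamma^{i+1}$ is obtained by choosing a permutation $\sigma$ of $\{0,\dots,L-1\}$ uniformly at random (independently of the past), setting $\Delta_0=\Gamma^i$, and for $1\le j\le L$ letting $\Delta_j$ be obtained from $\Delta_{j-1}$ by setting $\Delta_j(\sigma(j-1))=\Delta_{j-1}((\sigma(j-1)+1)\bmod L)$ and $\Delta_j(t)=\Delta_{j-1}(t)$ for all $t\ne\sigma(j-1)$; finally $\Gamma^{i+1}=\Delta_L$. Let $T$ be the first time at which the process is in the all-$0$ or the all-$1$ state. Then for every integer $a\ge1$, $\Pr[T\ge 4aL^2]\le L\,2^{-a}$. *)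

From mathcomp Require Import all_boot all_order all_algebra all_fingroup.
Set Implicit Arguments. Unset Strict Implicit. Unset Printing Implicit Defensive.
Import GRing.Theory Num.Theory.

Definition state (L : nat) := {ffun 'I_L -> bool}.

Definition upd (L : nat) (g : state L) (s : 'I_L) : state L :=
  [ffun t => if t == s then g (ordS s) else g t].

(* One step of the chain driven by the permutation sigma:
   Delta_0 = g, Delta_j = upd Delta_{j-1} (sigma (j-1)) for j = 1..L,
   result Delta_L.  (enum 'I_L lists 0,1,...,L-1 in increasing order.) *)
Definition step (L : nat) (sigma : {perm 'I_L}) (g : state L) : state L :=
  foldl (fun d j => upd d (sigma j)) g (enum 'I_L).

Definition gam (L : nat) (g0 : state L) (ss : seq {perm 'I_L}) (i : nat)
  : state L :=
  foldl (fun g sigma => step sigma g) g0 (take i ss).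

Definition absorbed (L : nat) (g : state L) : bool :=
  [forall t, g t == false] || [forall t, g t == true].

(* Pr[T >= n] where T = first time the process is absorbed: the event
   {Gamma^i not absorbed for all i < n} depends only on the first n
   permutations, which are i.i.d. uniform on S_L; so the probability is the
   proportion of n-tuples of permutations realizing it. *)
Definition prob_T_ge (L : nat) (g0 : state L) (n : nat) : rat :=
  (#|[set ss : n.-tuple {perm 'I_L} |
        [forall i : 'I_n, ~~ absorbed (gam g0 ss i)]]|%:R
   / (#|{perm 'I_L}| ^ n)%:R)%R.

From mathcomp Require Import all_boot all_order all_algebra all_fingroup.
From mathcomp Require Import zify ring lra.
Set Implicit Arguments. Unset Strict Implicit. Unset Printing Implicit Defensive.
Import Order.TTheory GRing.Theory Num.Theory.

(* Let X be the number of ones of the state.  Averaged over the uniformly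
   random update order sigma, X is a martingale: by rotation invariance every
   coordinate is, on average, the source of exactly one final value.  If the
   state is not absorbed, pick u with Gamma(u+1) <> Gamma(u+2).  Whenever u+2
   is updated after both u and u+1 (probability at least 1/3, or always when
   L = 2), the orders sigma and sigma.(u u+1) produce different numbers of
   ones, so at least one of them changes X; hence X moves with probability at
   least 1/6.  The potential X (L - X) <= L^2/4 therefore drops by at least 1/6
   in expectation at every non-absorbed step, so E[min(T, n)] <= 6 L^2/4 and
   Pr[T >= 4 L^2] <= 1/2; the Markov property turns this into
   Pr[T >= 4 a L^2] <= 2^-a. *)

Lemma ordS_neq L (x : 'I_L) : (1 < L)%N -> ordS x != x.
Proof.
move=> L_gt1; apply/eqP => /(congr1 val) /=.
have [lt_xL|le_Lx] := ltnP x.+1 L; first by rewrite modn_small // => /eqP; rewrite gtn_eqF.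
have eq_xL : x.+1 = L by apply/eqP; rewrite eqn_leq ltn_ord.
by rewrite eq_xL modnn => x0; move: L_gt1; rewrite -eq_xL -x0.
Qed.

Lemma ordinal_gt1 L (x y : 'I_L) : x != y -> (1 < L)%N.
Proof.
rewrite ltnNge; apply: contra => L_le1; apply/eqP/ord_inj.
by have := ltn_ord x; have := ltn_ord y; lia.
Qed.

Lemma ordS_invariant_const L (T : Type) (f : 'I_L -> T) :
  (forall t, f (ordS t) = f t) -> forall s t, f s = f t.
Proof.
case: L f => [|n] f f_ordS s t; first by case: s.
suff f0 (r : 'I_n.+1) : f r = f ord0 by rewrite !f0.
case: r => r; elim: r => [|r IH] lt_r; first by congr f; apply: val_inj.
have -> : Ordinal lt_r = ordS (Ordinal (ltnW lt_r)) by apply: val_inj; rewrite /= modn_small.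
by rewrite f_ordS IH.
Qed.

Lemma uniq_split2 (T : eqType) (x y : T) P M S : uniq (P ++ x :: M ++ y :: S) ->
  [/\ x \notin P ++ M ++ S, y \notin P ++ M ++ S & x != y].
Proof.
have /perm_uniq -> : perm_eq (P ++ x :: M ++ y :: S) (x :: y :: P ++ M ++ S).
  by rewrite -cat1s perm_catCA /= perm_cons -cat1s catA perm_catCA /= perm_cons catA.
by rewrite /= inE negb_or => /and3P[/andP[-> ->] -> _].
Qed.

Lemma split_ordered (T : eqType) (l : seq T) x y z :
  uniq l -> y \in l -> (index x l < index y l)%N ->
  (z == x) || (index y l < index z l)%N ->
  exists P M S, l = P ++ x :: M ++ y :: S /\ z \notin P ++ M.
Proof.
move=> uniq_l yl lt_xy z_late.
have xA : x \in take (index y l) l by rewrite in_take_leq ?index_size.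
have zA : z \in take (index y l) l -> z = x.
  rewrite in_take_leq ?index_size // => lt_zy.
  by move: z_late; rewrite ltnNge ltnW //= orbF => /eqP.
move: xA uniq_l zA; case/path.splitP: yl => A S; case/splitPr => P M.
rewrite cat_rcons -catA /= => uniq_l zA; exists P, M, S; split=> //.
have [xPMS _ _] := uniq_split2 uniq_l; apply: contraNN xPMS => zPM.
have <- : z = x by apply: zA; move: zPM; rewrite !mem_cat inE => /orP[->|->]; rewrite ?orbT.
by rewrite catA mem_cat zPM.
Qed.

Lemma ltn_sum_at (I : finType) (F G : I -> nat) i0 :
  (forall i, F i <= G i)%N -> (F i0 < G i0)%N -> (\sum_i F i < \sum_i G i)%N.
Proof.
move=> le_FG lt_FG; rewrite (bigD1 i0) //= [X in (_ < X)%N](bigD1 i0) //=.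
by rewrite -addSn leq_add // leq_sum.
Qed.

Lemma map_tperm_notin (T : finType) (x y : T) s :
  x \notin s -> y \notin s -> map (tperm x y) s = s.
Proof.
move=> xs ys; apply: map_id_in => t ts.
by apply: tpermD; [move: xs | move: ys]; apply: contraNneq => ->.
Qed.

Lemma sum_perm_mulg L (tau : {perm 'I_L}) (F : {perm 'I_L} -> nat) :
  \sum_sigma F (sigma * tau)%g = \sum_sigma F sigma.
Proof. by rewrite [RHS](reindex_inj (mulIg tau)). Qed.

Section SourceMap.
Variable L : nat.
Implicit Types (g : state L) (x s t : 'I_L) (l : seq 'I_L) (sigma : {perm 'I_L}).

Definition src_upd x t := if t == x then ordS x else t.
Definition src l s := foldr src_upd s l.

Lemma src_upd_id x : src_upd x x = ordS x.
Proof. by rewrite /src_upd eqxx. Qed.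

Lemma src_upd_neq x t : t != x -> src_upd x t = t.
Proof. by rewrite /src_upd => /negbTE ->. Qed.

Lemma src_cons x l s : src (x :: l) s = src_upd x (src l s).
Proof. by []. Qed.

Lemma src_cat l1 l2 s : src (l1 ++ l2) s = src l1 (src l2 s).
Proof. by rewrite /src foldr_cat. Qed.

Lemma src_notin l s : s \notin l -> src l s = s.
Proof.
elim: l => [//|x l IH]; rewrite inE negb_or => /andP[sx sl].
by rewrite src_cons IH // src_upd_neq.
Qed.

Lemma src_map_ordS l s : src (map (@ordS L) l) (ordS s) = ordS (src l s).
Proof.
elim: l => [//|x l IH]; rewrite [map _ _]/= !src_cons IH /src_upd.
by rewrite (inj_eq (@ordS_inj L)); case: eqP.
Qed.

Lemma foldl_upd g l : foldl (@upd L) g l = [ffun s => g (src l s)].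
Proof.
elim/last_ind: l => [|l x IH]; first by apply/ffunP => s; rewrite !ffunE.
rewrite foldl_rcons IH; apply/ffunP => s.
by rewrite !ffunE /src foldr_rcons /src_upd; case: eqP.
Qed.

Definition sweep sigma := map sigma (enum 'I_L).

Lemma step_src sigma g : step sigma g = [ffun s => g (src (sweep sigma) s)].
Proof.
by rewrite /step /sweep -foldl_upd; elim: (enum 'I_L) g => [//|x l IH] g /=.
Qed.

Lemma sweep_mulg sigma tau : sweep (sigma * tau)%g = map tau (sweep sigma).
Proof. by rewrite /sweep -map_comp; apply: eq_map => j; rewrite permM. Qed.

Lemma sweep_uniq sigma : uniq (sweep sigma).
Proof. by rewrite map_inj_uniq ?enum_uniq //; apply: perm_inj. Qed.

Lemma mem_sweep sigma x : x \in sweep sigma.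
Proof. by rewrite -(permKV sigma x); apply: map_f; rewrite mem_enum. Qed.

Definition upd_time sigma x : 'I_L := (sigma^-1)%g x.

Lemma index_sweep sigma x : index x (sweep sigma) = upd_time sigma x.
Proof.
by rewrite -{1}(permKV sigma x) index_map ?index_enum_ord //; apply: perm_inj.
Qed.

Lemma upd_time_mul_tperm sigma x y z :
  upd_time (sigma * tperm x y)%g z = upd_time sigma (tperm x y z).
Proof. by rewrite /upd_time invMg permM tpermV. Qed.

Lemma upd_time_inj sigma : injective (upd_time sigma).
Proof. exact: perm_inj. Qed.

Definition updated_last sigma x y z :=
  (upd_time sigma y < upd_time sigma x)%N && (upd_time sigma z < upd_time sigma x)%N.

End SourceMap.

Section AdjacentSwap.
Variables (L : nat) (x : 'I_L) (P M S : seq 'I_L).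
Let y := ordS x.
Let z := ordS y.
Hypothesis uniq_sweep : uniq (P ++ x :: M ++ y :: S).
Hypothesis z_late : z \notin P ++ M.

Let src_split a b s :
  src (P ++ a :: M ++ b :: S) s = src P (src_upd a (src M (src_upd b (src S s)))).
Proof. by rewrite src_cat src_cons src_cat. Qed.

Lemma src_swap s :
  src (P ++ x :: M ++ y :: S) s = src (P ++ y :: M ++ x :: S) s \/
  src (P ++ x :: M ++ y :: S) s = y.
Proof.
have [] := uniq_split2 uniq_sweep; rewrite !mem_cat !negb_or.
move=> /and3P[xP xM xS] /and3P[yP yM yS] xy.
move: z_late; rewrite mem_cat negb_or => /andP[zP zM].
rewrite !src_split; have yx : y != x by rewrite eq_sym.
have [->|sx] := eqVneq (src S s) x.
  by right; rewrite (src_upd_neq xy) (src_notin xM) src_upd_id src_notin.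
have [->|sy] := eqVneq (src S s) y.
  rewrite src_upd_id (src_notin zM).
  have [zx|zx] := eqVneq z x; first by right; rewrite {1}zx src_upd_id src_notin.
  left; rewrite (src_upd_neq zx) (src_notin zP).
  by rewrite (src_upd_neq yx) (src_notin yM) src_upd_id src_notin.
rewrite (src_upd_neq sy) (src_upd_neq sx).
have [->|tx] := eqVneq (src M (src S s)) x; first by right; rewrite src_upd_id src_notin.
have [->|ty] := eqVneq (src M (src S s)) y; first by right; rewrite (src_upd_neq yx) src_notin.
by left; rewrite (src_upd_neq tx) (src_upd_neq ty).
Qed.

Lemma src_swap_at :
  src (P ++ x :: M ++ y :: S) x = y /\ src (P ++ y :: M ++ x :: S) x = z.
Proof.
have [] := uniq_split2 uniq_sweep; rewrite !mem_cat !negb_or.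
move=> /and3P[xP xM xS] /and3P[yP yM yS] xy.
move: z_late; rewrite mem_cat negb_or => /andP[zP zM].
rewrite !src_split (src_notin xS); split.
  by rewrite (src_upd_neq xy) (src_notin xM) src_upd_id src_notin.
by rewrite src_upd_id (src_notin yM) src_upd_id src_notin.
Qed.

End AdjacentSwap.

Definition ones L (g : state L) : nat := \sum_t g t.

Lemma ones_redirect_neq L (g : state L) (a b : 'I_L -> 'I_L) v i0 :
  (forall i, a i = b i \/ a i = v) -> a i0 = v -> g (b i0) != g v ->
  ones [ffun s => g (a s)] != ones [ffun s => g (b s)].
Proof.
move=> ab ai0 gne; rewrite /ones neq_ltn.
have sum_lt (c d : 'I_L -> 'I_L) : (forall i, g (c i) <= g (d i))%N ->
    (g (c i0) < g (d i0))%N ->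
    (\sum_t [ffun s => g (c s)] t < \sum_t [ffun s => g (d s)] t)%N.
  by move=> le_cd lt_cd; apply: (ltn_sum_at (i0 := i0)) => [i|]; rewrite !ffunE.
case gv: (g v); case gb: (g (b i0)); rewrite ?gv ?gb // in gne.
- apply/orP; right; apply: sum_lt => [i|]; last by rewrite ai0 gv gb.
  by case: (ab i) => ->; rewrite ?gv ?leq_b1.
- apply/orP; left; apply: sum_lt => [i|]; last by rewrite ai0 gv gb.
  by case: (ab i) => ->; rewrite ?gv.
Qed.

Lemma card_perm_le_updated_last L (x y z : 'I_L) : x != y -> y != z -> x != z ->
  (#|{perm 'I_L}| <= 3 * \sum_sigma (updated_last sigma x y z : nat))%N.
Proof.
move=> xy yz xz.
have e_yxz : \sum_s (updated_last s y x z : nat) = \sum_s (updated_last s x y z : nat).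
  rewrite -(sum_perm_mulg (tperm x y)); apply: eq_bigr => s _.
  by rewrite /updated_last !upd_time_mul_tperm tpermL tpermR tpermD.
have e_zyx : \sum_s (updated_last s z y x : nat) = \sum_s (updated_last s x y z : nat).
  rewrite -(sum_perm_mulg (tperm x z)); apply: eq_bigr => s _.
  by rewrite /updated_last !upd_time_mul_tperm tpermL tpermR tpermD // eq_sym.
have some_last s :
    (1 <= updated_last s x y z + updated_last s y x z + updated_last s z y x)%N.
  have neq_time a b : a != b -> (upd_time s a != upd_time s b :> nat).
    by move=> ab; apply: contra ab => /eqP /val_inj /upd_time_inj ->.
  move: (neq_time _ _ xy) (neq_time _ _ yz) (neq_time _ _ xz); rewrite /updated_last.
  case: (ltngtP (upd_time s x) (upd_time s y)); case: (ltngtP (upd_time s x) (upd_time s z));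
    case: (ltngtP (upd_time s y) (upd_time s z)) => //= *; lia.
apply: (@leq_trans (\sum_s
    (updated_last s x y z + updated_last s y x z + updated_last s z y x)%N)).
  by rewrite -sum1_card leq_sum.
by rewrite !big_split /= e_yxz e_zyx !mulSn mul0n addn0 addnA.
Qed.

Section OnesChange.
Variables (L : nat) (g : state L) (u : 'I_L).
Hypothesis L_gt1 : (1 < L)%N.
Hypothesis g_u12 : g (ordS u) != g (ordS (ordS u)).

Definition ordS2_updated_last sigma :=
  (ordS (ordS u) == u) || updated_last sigma (ordS (ordS u)) u (ordS u).

Lemma ordS2_updated_last_mul_tperm sigma :
  ordS2_updated_last (sigma * tperm u (ordS u))%g = ordS2_updated_last sigma.
Proof.
rewrite /ordS2_updated_last /updated_last; have [//|z_u] := eqVneq (ordS (ordS u)) u.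
have z_u1 : ordS (ordS u) != ordS u by rewrite ordS_neq.
by rewrite !upd_time_mul_tperm tpermL tpermR tpermD 1?eq_sym // andbC.
Qed.

Lemma ones_step_tperm_neq_ordered sigma :
  (upd_time sigma u < upd_time sigma (ordS u))%N -> ordS2_updated_last sigma ->
  ones (step sigma g) != ones (step (sigma * tperm u (ordS u))%g g).
Proof.
move=> lt_u_u1 late.
have [P [M [S [def_l zPM]]]] : exists P M S,
    sweep sigma = P ++ u :: M ++ ordS u :: S /\ ordS (ordS u) \notin P ++ M.
  apply: split_ordered; rewrite ?sweep_uniq ?mem_sweep ?index_sweep //.
  by case/orP: late => [->//|/andP[_ ->]]; rewrite orbT.
have uniq_l := sweep_uniq sigma; rewrite def_l in uniq_l.
have [] := uniq_split2 uniq_l; rewrite !mem_cat !negb_or.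
move=> /and3P[uP uM uS] /and3P[u1P u1M u1S] _.
have swap_l : map (tperm u (ordS u)) (sweep sigma) = P ++ ordS u :: M ++ u :: S.
  by rewrite def_l map_cat /= map_cat /= tpermL tpermR !map_tperm_notin.
have [src_u src_u'] := src_swap_at uniq_l zPM.
rewrite !step_src sweep_mulg swap_l def_l.
apply: (ones_redirect_neq (v := ordS u) (i0 := u)) => [s||].
- exact: src_swap uniq_l zPM s.
- exact: src_u.
- by rewrite src_u' eq_sym.
Qed.

Lemma ones_step_tperm_neq sigma : ordS2_updated_last sigma ->
  ones (step sigma g) != ones (step (sigma * tperm u (ordS u))%g g).
Proof.
move=> late; have [lt_u_u1|lt_u1_u|/val_inj/upd_time_inj u_u1] :=
  ltngtP (upd_time sigma u) (upd_time sigma (ordS u)).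
- exact: ones_step_tperm_neq_ordered lt_u_u1 late.
- set tau := (sigma * tperm u (ordS u))%g.
  have -> : sigma = (tau * tperm u (ordS u))%g by rewrite -mulgA tperm2 mulg1.
  rewrite eq_sym; apply: ones_step_tperm_neq_ordered.
    by rewrite !upd_time_mul_tperm tpermL tpermR.
  by rewrite ordS2_updated_last_mul_tperm.
- by move: (ordS_neq u L_gt1); rewrite -u_u1 eqxx.
Qed.

Lemma card_perm_le_ones_change :
  (#|{perm 'I_L}| <= 6 * \sum_sigma (ones (step sigma g) != ones g : nat))%N.
Proof.
have u_u1 : u != ordS u by rewrite eq_sym ordS_neq.
have card_late : (#|{perm 'I_L}| <= 3 * \sum_s (ordS2_updated_last s : nat))%N.
  have [z_u|z_u] := eqVneq (ordS (ordS u)) u.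
    rewrite -sum1_card -[X in (X <= _)%N]mul1n leq_mul // leq_sum // => s _.
    by rewrite /ordS2_updated_last z_u eqxx.
  apply: leq_trans (card_perm_le_updated_last z_u u_u1 _) _.
    by rewrite (inj_eq (@ordS_inj L)) ordS_neq.
  by rewrite leq_mul2l leq_sum // => s _; rewrite /ordS2_updated_last (negbTE z_u).
(* Pair sigma with sigma.(u u+1): within each pair at least one member moves X. *)
have late_change : (\sum_s (ordS2_updated_last s : nat) <=
                    2 * \sum_s (ones (step s g) != ones g : nat))%N.
  rewrite mul2n -addnn -{2}(sum_perm_mulg (tperm u (ordS u))
                                          (fun s => ones (step s g) != ones g : nat)).
  rewrite -big_split leq_sum // => s _.
  case late: (ordS2_updated_last s) => //=.
  have := ones_step_tperm_neq late.
  case: (ones (step s g) =P ones g) => [->|//].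
  by case: (_ =P ones g) => [->|//]; rewrite eqxx.
by rewrite (leq_trans card_late) // (_ : 6 = 3 * 2)%N // -mulnA leq_mul2l late_change orbT.
Qed.

End OnesChange.

Section OnesMartingale.
Variable L : nat.

Definition src_count (t : 'I_L) : nat :=
  \sum_(sigma : {perm 'I_L}) \sum_s (src (sweep sigma) s == t : nat).

Lemma src_count_ordS t : src_count (ordS t) = src_count t.
Proof.
set r := perm (@ordS_inj L).
rewrite /src_count [LHS](reindex_inj (mulIg r)); apply: eq_bigr => sigma _.
rewrite [LHS](reindex_inj (@ordS_inj L)); apply: eq_bigr => s _.
have -> : sweep (sigma * r)%g = map (@ordS L) (sweep sigma).
  by rewrite sweep_mulg; apply: eq_map => x; rewrite permE.
by rewrite src_map_ordS (inj_eq (@ordS_inj L)).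
Qed.

Lemma sum_src_count : \sum_t src_count t = (#|{perm 'I_L}| * L)%N.
Proof.
rewrite exchange_big -sum1_card big_distrl; apply: eq_bigr => sigma _.
rewrite exchange_big /= mul1n -[in RHS](card_ord L) -sum1_card; apply: eq_bigr => s _.
by rewrite (bigD1 (src (sweep sigma) s)) //= eqxx big1 // => t /negbTE; rewrite eq_sym => ->.
Qed.

Lemma src_countE t : src_count t = #|{perm 'I_L}|.
Proof.
have const := ordS_invariant_const src_count_ordS.
move/eqP: sum_src_count; rewrite (eq_bigr (fun _ => src_count t)) => [|s _]; last exact: const.
have L_gt0 : (0 < L)%N := leq_ltn_trans (leq0n t) (ltn_ord t).
by rewrite sum_nat_const card_ord mulnC eqn_mul2r gtn_eqF // => /eqP.
Qed.

Lemma sum_ones_step (g : state L) :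
  \sum_(sigma : {perm 'I_L}) ones (step sigma g) = (#|{perm 'I_L}| * ones g)%N.
Proof.
have pick_src sigma s : (g (src (sweep sigma) s) : nat) =
    \sum_t ((src (sweep sigma) s == t) * g t)%N.
  rewrite (bigD1 (src (sweep sigma) s)) //= eqxx mul1n big1 ?addn0 // => t.
  by rewrite eq_sym => /negbTE ->.
rewrite /ones big_distrr /=.
transitivity (\sum_t (src_count t * g t)%N); last first.
  by apply: eq_bigr => t _; rewrite src_countE.
transitivity (\sum_sigma \sum_s \sum_t ((src (sweep sigma) s == t) * g t)%N).
  by apply: eq_bigr => sigma _; rewrite step_src; apply: eq_bigr => s _; rewrite ffunE pick_src.
under eq_bigr do rewrite exchange_big /=.
rewrite exchange_big /=; apply: eq_bigr => t _.
by rewrite /src_count big_distrl /=; apply: eq_bigr => sigma _; rewrite big_distrl.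
Qed.

End OnesMartingale.

Lemma forall_ord_recl n (P : nat -> bool) :
  [forall i : 'I_n.+1, P i] = P 0%N && [forall i : 'I_n, P i.+1].
Proof.
apply/forallP/andP => [h|[h0 /forallP h] [[|i] lt_i] //=].
  by split; [exact: (h ord0) | apply/forallP => i; exact: (h (lift ord0 i))].
exact: (h (Ordinal (lt_i : i < n)%N)).
Qed.

Lemma sum_tuple_cons (T : finType) n (F : n.+1.-tuple T -> nat) :
  \sum_(ss : n.+1.-tuple T) F ss = \sum_(x : T) \sum_(ss : n.-tuple T) F [tuple of x :: ss].
Proof.
rewrite pair_big (reindex (fun p : T * n.-tuple T => [tuple of p.1 :: p.2])) /=.
  by apply: eq_bigr => -[x ss].
exists (fun ss : n.+1.-tuple T => (thead ss, [tuple of behead ss])) => [[x ss] _|ss _].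
  by rewrite theadE; congr pair; apply: val_inj.
by rewrite [RHS]tuple_eta.
Qed.

Section SurvivalProbability.
Variable L : nat.
Implicit Types (g : state L) (n : nat).
Local Notation N := #|{perm 'I_L}|.

Definition n_surv g n : nat :=
  #|[set ss : n.-tuple {perm 'I_L} | [forall i : 'I_n, ~~ absorbed (gam g ss i)]]|.

Lemma card_perm_gt0 : (0 < N)%N.
Proof. by apply/card_gt0P; exists 1%g. Qed.

Lemma n_surv_le g n : (n_surv g n <= N ^ n)%N.
Proof. by rewrite -card_tuple max_card. Qed.

Lemma n_surv0 g : n_surv g 0 = 1%N.
Proof.
rewrite -[RHS](expn0 N) -card_tuple; apply: eq_card => ss.
by rewrite !inE; apply/forallP => -[].
Qed.

Lemma n_survS g n :
  n_surv g n.+1 = if absorbed g then 0%N else \sum_sigma n_surv (step sigma g) n.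
Proof.
rewrite /n_surv -sum1dep_card big_mkcond sum_tuple_cons.
have surv_cons sigma (ss : n.-tuple {perm 'I_L}) :
    [forall i : 'I_n.+1, ~~ absorbed (gam g [tuple of sigma :: ss] i)] =
    ~~ absorbed g && [forall i : 'I_n, ~~ absorbed (gam (step sigma g) ss i)].
  by rewrite (forall_ord_recl _ (fun i => ~~ absorbed (gam g (sigma :: ss) i))) /gam take0.
case: ifP => abs_g.
  by rewrite big1 // => sigma _; rewrite big1 // => ss _; rewrite surv_cons abs_g.
apply: eq_bigr => sigma _; rewrite -sum1dep_card [RHS]big_mkcond.
by apply: eq_bigr => ss _; rewrite surv_cons abs_g.
Qed.

Local Open Scope ring_scope.

Definition perm_mean (F : {perm 'I_L} -> rat) : rat := (\sum_sigma F sigma) / N%:R.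

Lemma eq_perm_mean (F G : {perm 'I_L} -> rat) : F =1 G -> perm_mean F = perm_mean G.
Proof. by move=> FG; rewrite /perm_mean (eq_bigr _ (fun sigma _ => FG sigma)). Qed.

Lemma ler_perm_mean (F G : {perm 'I_L} -> rat) :
  (forall sigma, F sigma <= G sigma) -> perm_mean F <= perm_mean G.
Proof. by move=> le_FG; rewrite ler_pM2r ?invr_gt0 ?ltr0n ?card_perm_gt0 // ler_sum. Qed.

Lemma perm_mean_cst (c : rat) : perm_mean (fun=> c) = c.
Proof.
rewrite /perm_mean sumr_const (_ : #|_| = N) // -[c *+ _]mulr_natr mulfK //.
by rewrite pnatr_eq0 -lt0n card_perm_gt0.
Qed.

Lemma perm_meanZ (c : rat) F : perm_mean (fun sigma => c * F sigma) = c * perm_mean F.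
Proof. by rewrite /perm_mean -mulr_sumr mulrA. Qed.

Lemma perm_mean_sum n (F : 'I_n -> {perm 'I_L} -> rat) :
  \sum_(k < n) perm_mean (F k) = perm_mean (fun sigma => \sum_(k < n) F k sigma).
Proof. by rewrite /perm_mean -mulr_suml exchange_big. Qed.

Lemma prob_T_ge_ge0 g n : 0 <= prob_T_ge g n.
Proof. by rewrite divr_ge0 ?ler0n. Qed.

Lemma prob_T_ge_le1 g n : prob_T_ge g n <= 1.
Proof.
by rewrite ler_pdivrMr ?mul1r ?ler_nat ?n_surv_le // ltr0n expn_gt0 card_perm_gt0.
Qed.

Lemma prob_T_ge_0 g : prob_T_ge g 0 = 1.
Proof. by rewrite /prob_T_ge -/(n_surv g 0) n_surv0 expn0 divr1. Qed.

Lemma prob_T_geS g n : prob_T_ge g n.+1 =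
  if absorbed g then 0 else perm_mean (fun sigma => prob_T_ge (step sigma g) n).
Proof.
rewrite /prob_T_ge -/(n_surv g n.+1) n_survS; case: ifP => _; first by rewrite mul0r.
by rewrite /perm_mean natr_sum -mulr_suml expnS natrM invfM mulrA mulrAC.
Qed.

Lemma prob_T_ge_addn_le g m n (B : rat) :
  (forall h : state L, prob_T_ge h n <= B) -> 0 <= B ->
  prob_T_ge g (m + n) <= prob_T_ge g m * B.
Proof.
move=> le_B B_ge0; elim: m g => [|m IH] g; first by rewrite add0n prob_T_ge_0 mul1r.
rewrite addSn !prob_T_geS; case: ifP => _; first by rewrite mul0r.
by rewrite mulrC -perm_meanZ; apply: ler_perm_mean => sigma; rewrite mulrC IH.
Qed.

Lemma prob_T_ge_nonincreasing g m n : (m <= n)%N -> prob_T_ge g n <= prob_T_ge g m.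
Proof.
move=> /subnK <-; rewrite addnC -[X in _ <= X]mulr1.
by apply: prob_T_ge_addn_le => // h; apply: prob_T_ge_le1.
Qed.

End SurvivalProbability.

Local Open Scope ring_scope.

Lemma sqr_natB_ge_neq (a b : nat) : ((a != b)%:R : rat) <= (a%:R - b%:R) ^+ 2.
Proof.
have sqr_ge1 (m n : nat) : (m < n)%N -> 1 <= (n%:R - m%:R) ^+ 2 :> rat.
  move=> lt_mn; have : 1 <= n%:R - m%:R :> rat by rewrite -natrB ?ler1n ?subn_gt0 // ltnW.
  by nra.
have [->|] := eqVneq a b; first by rewrite sqr_ge0.
by case: ltngtP => // [/sqr_ge1|/sqr_ge1]; rewrite // -sqrrN opprB.
Qed.

Section Potential.
Variable L : nat.
Implicit Types g : state L.
Local Notation N := #|{perm 'I_L}|.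

Definition potential g : rat := (ones g)%:R * (L%:R - (ones g)%:R).

Lemma ones_le g : (ones g <= L)%N.
Proof.
rewrite /ones -[leqRHS]card_ord -sum1_card leq_sum // => t _.
by rewrite leq_b1.
Qed.

Lemma potential_ge0 g : 0 <= potential g.
Proof. by rewrite mulr_ge0 ?ler0n // subr_ge0 ler_nat ones_le. Qed.

Lemma potential_le g : potential g <= L%:R ^+ 2 / 4.
Proof. by rewrite /potential; have := sqr_ge0 (L%:R - 2 * (ones g)%:R : rat); nra. Qed.

Lemma exists_disagreeing_neighbours g :
  ~~ absorbed g -> exists u, g (ordS u) != g (ordS (ordS u)).
Proof.
move=> not_abs; apply/existsP; apply: contraR not_abs => /existsPn agree.
have g_ordS t : g (ordS t) = g t.
  by apply/eqP; move: (agree (ord_pred t)); rewrite ord_predK eq_sym negbK.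
have g_const := ordS_invariant_const g_ordS.
apply/orP; case: (pickP g) => [s gs|g_false]; [right|left]; apply/forallP => t.
  by rewrite (g_const t s) gs.
by rewrite g_false.
Qed.

Lemma potential_drift g :
  ~~ absorbed g -> perm_mean (fun sigma => potential (step sigma g)) <= potential g - 1 / 6.
Proof.
move=> not_abs; have [u g_u12] := exists_disagreeing_neighbours not_abs.
have L_gt1 : (1 < L)%N.
  apply: (@ordinal_gt1 _ (ordS u) (ordS (ordS u))).
  by apply: contraNneq g_u12 => /(congr1 g) ->.
set X : rat := (ones g)%:R.
pose D sigma : rat := (ones (step sigma g))%:R - X.
have sumD : \sum_sigma D sigma = 0.
  rewrite /D sumrB -natr_sum sum_ones_step sumr_const (_ : #|_| = N) //.
  by rewrite natrM -[X *+ _]mulr_natl subrr.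
have sumD2 : N%:R / 6 <= \sum_sigma D sigma ^+ 2.
  apply: le_trans (ler_sum _ (fun s _ => sqr_natB_ge_neq _ _)).
  by rewrite -natr_sum ler_pdivrMr // -natrM ler_nat mulnC (card_perm_le_ones_change L_gt1 g_u12).
have potential_step sigma :
    potential (step sigma g) = potential g + (L%:R - 2 * X) * D sigma - D sigma ^+ 2.
  by rewrite /potential /D /X; ring.
rewrite /perm_mean (eq_bigr _ (fun s _ => potential_step s)) sumrB big_split /=.
rewrite -[Y in _ + Y - _]mulr_sumr sumD mulr0 addr0 sumr_const (_ : #|_| = N) //.
have N_gt0 : 0 < N%:R :> rat by rewrite ltr0n card_perm_gt0.
by rewrite -mulr_natr ler_pdivrMr //; lra.
Qed.

End Potential.

Lemma sum_prob_T_ge_le_potential L (g : state L) n :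
  \sum_(k < n) prob_T_ge g k.+1 <= 6 * potential g.
Proof.
elim: n g => [|n IH] g; first by rewrite big_ord0 mulr_ge0 ?potential_ge0.
rewrite big_ord_recl /=; under eq_bigr do rewrite prob_T_geS.
rewrite prob_T_geS; have [abs_g|not_abs] := boolP (absorbed g).
  by rewrite big1_eq add0r mulr_ge0 ?potential_ge0.
rewrite (eq_perm_mean (fun sigma => prob_T_ge_0 (step sigma g))) perm_mean_cst perm_mean_sum.
have := ler_perm_mean (fun sigma => IH (step sigma g)); rewrite perm_meanZ.
by have := potential_drift not_abs; lra.
Qed.

Lemma prob_T_ge_le_half L (g : state L) : (1 <= L)%N -> prob_T_ge g (4 * L ^ 2) <= 1 / 2.
Proof.
move=> L_ge1; set n := (4 * L ^ 2)%N.
have lower : n%:R * prob_T_ge g n <= \sum_(k < n) prob_T_ge g k.+1.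
  apply: (@le_trans _ _ (\sum_(k < n) prob_T_ge g n)).
    by rewrite sumr_const card_ord mulr_natl.
  by apply: ler_sum => k _; apply: prob_T_ge_nonincreasing.
have n_E : n%:R = 4 * L%:R ^+ 2 :> rat by rewrite /n natrM natrX.
have L_ge1' : 1 <= L%:R :> rat by rewrite ler1n.
have := sum_prob_T_ge_le_potential g n; have := potential_le g; have := prob_T_ge_ge0 g n.
by rewrite n_E in lower; nra.
Qed.

Lemma prob_T_ge_le_geom L (g : state L) a :
  (1 <= L)%N -> prob_T_ge g (4 * a * L ^ 2) <= (1 / 2) ^+ a.
Proof.
move=> L_ge1; elim: a g => [|a IH] g; first by rewrite mul0n prob_T_ge_0.
rewrite (_ : 4 * a.+1 * L ^ 2 = 4 * a * L ^ 2 + 4 * L ^ 2)%N; last by ring.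
apply: le_trans (prob_T_ge_addn_le g _ (fun h => prob_T_ge_le_half h L_ge1) _) _ => //.
by rewrite exprSr ler_pM2r // IH.
Qed.

Unset Implicit Arguments.

Theorem claim5 (L : nat) (hL : (1 <= L)%N) (g0 : state L) (a : nat)
  (ha : (1 <= a)%N) :
  prob_T_ge g0 (4 * a * L ^ 2) <= L%:R / (2 ^ a)%:R.
Proof.
apply: le_trans (prob_T_ge_le_geom g0 a hL) _.
by rewrite expr_div_n expr1n natrX ler_pM2r ?invr_gt0 ?exprn_gt0 // ler1n.
Qed.
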